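(* Let $R$ be a commutative Noetherian ring, $M$ a finitely generated $R$-module, $X \subseteq \mathrm{Spec}(R)$ a basic set, $\mathscr{E}$ an $R$-submodule of $\mathrm{Hom}_R(M,R)$, and $S \subseteq M$ a subset. There exists a finite set of primes $\Lambda \subseteq X$ such that for every $\mathfrak{p} \in X \setminus \Lambda$ there exists $\mathfrak{q} \in \Lambda$ with $\mathfrak{q} \subsetneq \mathfrak{p}$ and $\delta^{\mathscr{E}}_\mathfrak{p}(S,M) = \delta^{\mathscr{E}}_\mathfrak{q}(S,M)$.
   Context: A subset $X \subseteq \mathrm{Spec}(R)$ is basic if, whenever the intersection of a family of primes in $X$ is a prime ideal, that intersection belongs to $X$. $\mathscr{E}_\mathfrak{p}$ is viewed inside $\mathrm{Hom}_{R_\mathfrak{p}}(M_\mathfrak{p},R_\mathfrak{p})$. A free $\mathscr{E}_\mathfrak{p}$-summand of $M_\mathfrak{p}$ is a direct summand $F$ (with complement $G$) of $M_\mathfrak{p}$, $F \cong R_\mathfrak{p}^n$, such that each coordinate of the projection $M_\mathfrak{p} \to F \cong R_\mathfrak{p}^n$ along $G$ lies in $\mathscr{E}_\mathfrak{p}$. With $\langle S\rangle$ the submodule generated by $S$, $\delta^{\mathscr{E}}_\mathfrak{p}(S,M)$ is the largest integer $n \ge 0$ such that there exists a free $\mathscr{E}_\mathfrak{p}$-summand of $M_\mathfrak{p}$ of rank $n$ contained in $\langle S\rangle_\mathfrak{p}$. *)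

(* Localization is encoded at the setoid level:
   an element m/s of M_p is a pair (m, s) with s \notin p, and equality in M_p
   is the usual relation (m,s) ~ (m',s') iff u (s' m - s m') = 0 for some u \notin p. *)
From HB Require Import structures.
From mathcomp Require Import all_boot all_algebra.
From Stdlib Require Import ClassicalEpsilon.
Set Implicit Arguments. Unset Strict Implicit. Unset Printing Implicit Defensive.
Import GRing.Theory.
Local Open Scope ring_scope.

Section RingDefs.
Variable R : comPzRingType.

Definition is_ideal (I : R -> Prop) : Prop :=
  I 0 /\ (forall x y, I x -> I y -> I (x + y)) /\ (forall a x, I x -> I (a * x)).

Definition is_prime (p : R -> Prop) : Prop :=
  is_ideal p /\ ~ p 1 /\ (forall a b, p (a * b) -> p a \/ p b).

Definition noetherian : Prop :=
  forall I, is_ideal I -> exists (n : nat) (g : 'I_n -> R),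
    forall x, I x <-> exists c : 'I_n -> R, x = \sum_(i < n) c i * g i.

Definition bigcapR (F : (R -> Prop) -> Prop) : R -> Prop :=
  fun x => forall q, F q -> q x.

Definition subset_Spec (X : (R -> Prop) -> Prop) : Prop :=
  forall p, X p -> is_prime p.

Definition basic (X : (R -> Prop) -> Prop) : Prop :=
  forall F : (R -> Prop) -> Prop, (forall q, F q -> X q) ->
    is_prime (bigcapR F) -> X (bigcapR F).

End RingDefs.

Section ModDefs.
Variables (R : comPzRingType) (M : lmodType R).

Definition fin_gen : Prop :=
  exists (n : nat) (g : 'I_n -> M), forall m, exists c : 'I_n -> R,
    m = \sum_(i < n) c i *: g i.

Definition linearR (f : M -> R) : Prop :=
  forall a x y, f (a *: x + y) = a * f x + f y.

Definition hom_submod (E : (M -> R) -> Prop) : Prop :=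
  (forall f, E f -> linearR f) /\ E (fun _ => 0) /\
  (forall f g, E f -> E g -> E (fun x => f x + g x)) /\
  (forall a f, E f -> E (fun x => a * f x)).

Definition span (S : M -> Prop) (m : M) : Prop :=
  exists (n : nat) (c : 'I_n -> R) (v : 'I_n -> M),
    (forall i, S (v i)) /\ m = \sum_(i < n) c i *: v i.

Section Loc.
Variable p : R -> Prop.

(* R_p : pairs (a, s) = a/s with s \notin p *)
Definition locR_valid (x : R * R) : Prop := ~ p x.2.
Definition locR_eq (x y : R * R) : Prop :=
  exists u, ~ p u /\ u * (y.2 * x.1 - x.2 * y.1) = 0.

Definition locM_valid (x : M * R) : Prop := ~ p x.2.
Definition locM_eq (x y : M * R) : Prop :=
  exists u, ~ p u /\ u *: (y.2 *: x.1 - x.2 *: y.1) = 0.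
Definition locM_zero : M * R := (0, 1).
Definition locM_add (x y : M * R) : M * R := (y.2 *: x.1 + x.2 *: y.1, x.2 * y.2).
Definition locM_scale (c : R * R) (x : M * R) : M * R := (c.1 *: x.1, c.2 * x.2).
Definition locM_sum (n : nat) (c : 'I_n -> R * R) (e : 'I_n -> M * R) : M * R :=
  foldr locM_add locM_zero [seq locM_scale (c i) (e i) | i <- enum 'I_n].

Definition loc_sub (N : M -> Prop) (x : M * R) : Prop :=
  exists m s, N m /\ ~ p s /\ locM_eq x (m, s).

Definition loc_submod (G : M * R -> Prop) : Prop :=
  (forall x, G x -> locM_valid x) /\
  (forall x y, G x -> locM_valid y -> locM_eq x y -> G y) /\
  G locM_zero /\
  (forall x y, G x -> G y -> G (locM_add x y)) /\
  (forall c x, locR_valid c -> G x -> G (locM_scale c x)).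

(* the element f/s of E_p (f \in E, s \notin p), viewed in Hom_{R_p}(M_p, R_p),
   applied to m/t *)
Definition Eapp (phi : (M -> R) * R) (x : M * R) : R * R :=
  (phi.1 x.1, phi.2 * x.2).

(* There is a free E_p-summand of M_p of rank n contained in N_p:
   F = R_p e_1 + ... + R_p e_n with basis e (i.e. the isomorphism F ~ R_p^n),
   a complement G with M_p = F (+) G, and the coordinates of the projection
   M_p -> F ~ R_p^n along G are the elements phi_i of E_p. *)
Definition free_E_summand_in (E : (M -> R) -> Prop) (N : M -> Prop) (n : nat) : Prop :=
  exists (e : 'I_n -> M * R) (G : M * R -> Prop) (phi : 'I_n -> (M -> R) * R),
    (forall i, locM_valid (e i)) /\ loc_submod G /\
    (forall i, loc_sub N (e i)) /\
    (forall i, E (phi i).1 /\ ~ p (phi i).2) /\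
    (forall x, locM_valid x -> exists g, G g /\
        locM_eq x (locM_add (locM_sum (fun i => Eapp (phi i) x) e) g)) /\
    (forall (c c' : 'I_n -> R * R) g g',
        (forall i, locR_valid (c i) /\ locR_valid (c' i)) -> G g -> G g' ->
        locM_eq (locM_add (locM_sum c e) g) (locM_add (locM_sum c' e) g') ->
        forall i, locR_eq (c i) (c' i)).

Definition delta (E : (M -> R) -> Prop) (S : M -> Prop) : nat :=
  epsilon (inhabits 0%N) (fun n => free_E_summand_in E (span S) n /\
    forall m, free_E_summand_in E (span S) m -> (m <= n)%N).

End Loc.
End ModDefs.

From Pilot Require Import Defs.
From mathcomp Require Import all_boot all_algebra ring.
From Stdlib Require Import ClassicalEpsilon Classical FunctionalExtensionality PropExtensionality.
From Stdlib Require List.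
Set Implicit Arguments. Unset Strict Implicit. Unset Printing Implicit Defensive.
Import GRing.Theory.
Local Open Scope ring_scope.

(* For a prime p, M_p has a free E_p-summand of rank n inside <S>_p exactly when some
   determinant det (f_i (m_j)) with f_i in E and m_j in <S> lies outside p: the
   coordinate forms of such a summand are dual to its basis, and conversely the adjugate
   turns f_1, ..., f_n into forms dual to m_1, ..., m_n, which split off R_p m_1 + ... +
   R_p m_n.  If M has k generators these determinants vanish for n > k, so delta_p only
   depends on which of the sets D_0, ..., D_k of such determinants are contained in p.
   Noetherian induction, splitting a family of primes along a, b with ab in its
   intersection, covers X by finitely many subfamilies whose intersections are prime and
   contain the same D_n as each of their members; X being basic, these intersections
   lie in X and form Lambda. *)

Local Notation "A ⊆ B" := (forall x, A x -> B x) (at level 70, no associativity).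

Section Noetherian.
Variable R : comPzRingType.

Lemma ideal_lincomb (I : R -> Prop) n (c g : 'I_n -> R) :
  is_ideal I -> (forall i, I (g i)) -> I (\sum_(i < n) c i * g i).
Proof. by move=> [I0 [ID IM]] Ig; apply: (big_ind I) => // i _; apply: IM. Qed.

Lemma bigcapR_ideal (Y : (R -> Prop) -> Prop) : subset_Spec Y -> is_ideal (bigcapR Y).
Proof.
move=> YP; split; first by move=> q /YP [[]].
split=> [x y Ix Iy q Yq | a x Ix q Yq]; have [[_ [ID IM]] _] := YP q Yq.
- by apply: ID; [apply: Ix | apply: Iy].
- by apply: IM; apply: Ix.
Qed.

Hypothesis noethR : noetherian R.

Lemma noetherian_chain_stationary (I : nat -> R -> Prop) :
  (forall k, is_ideal (I k)) -> (forall k, I k ⊆ I k.+1) ->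
  exists K, I K.+1 ⊆ I K.
Proof.
move=> Iideal Iincr.
have Imono k l : (k <= l)%N -> I k ⊆ I l.
  move/subnK <-; elim: (l - k)%N => [//|j IHj] x /IHj; exact: Iincr.
pose U x := exists k, I k x.
have Uideal : is_ideal U.
  split; first by exists 0%N; case: (Iideal 0%N).
  split=> [x y [k Ix] [l Iy] | a x [k Ix]].
  - exists (maxn k l); have [_ [ID _]] := Iideal (maxn k l).
    by apply: ID; [apply: (Imono k) Ix; rewrite leq_maxl
                  | apply: (Imono l) Iy; rewrite leq_maxr].
  - by exists k; have [_ [_ IM]] := Iideal k; apply: IM.
have [n [g Ug]] := noethR Uideal.
have [k Ik] : exists k : 'I_n -> nat, forall i, I (k i) (g i).
  apply: (choice (fun i k => I k (g i))) => i.
  apply: (proj2 (Ug (g i))); exists (fun j => (j == i)%:R).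
  rewrite (bigD1 i) //= eqxx mul1r big1 ?addr0 // => j /negbTE ->; exact: mul0r.
exists (\max_(i < n) k i) => x Ix; have /Ug [c ->] : U x by exists (\max_(i < n) k i).+1.
by apply: ideal_lincomb => // i; apply: (Imono (k i)) (Ik i); apply: leq_bigmax.
Qed.

Lemma noetherian_ind (P : (R -> Prop) -> Prop) :
  (forall I, is_ideal I ->
     (forall J, is_ideal J -> I ⊆ J -> (exists x, J x /\ ~ I x) -> P J) -> P I) ->
  forall I, is_ideal I -> P I.
Proof.
move=> Pind I0 I0ideal; apply: NNPP => notP0.
pose bad := {I | is_ideal I /\ ~ P I}.
pose grows (I J : bad) := sval I ⊆ sval J /\ exists x, sval J x /\ ~ sval I x.
have [next nextP] : exists next : bad -> bad, forall I, grows I (next I).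
  apply: (choice grows) => -[I [Iideal notPI]]; apply: NNPP => noJ; apply: (notPI).
  apply: Pind => // J Jideal IJ [x [Jx notIx]]; apply: NNPP => notPJ.
  by apply: noJ; exists (exist _ J (conj Jideal notPJ)); split=> //; exists x.
pose I0bad : bad := exist _ I0 (conj I0ideal notP0).
pose I k := sval (iter k next I0bad).
have [K IK] : exists K, I K.+1 ⊆ I K.
  apply: noetherian_chain_stationary => k; first by rewrite /I; case: (iter _ _ _) => ? [].
  exact: (proj1 (nextP _)).
by have [_ [x [Ix notIx]]] := nextP (iter K next I0bad); apply/notIx/IK.
Qed.

Definition prime_intersections_in (Y : (R -> Prop) -> Prop) (L : seq (R -> Prop)) :=
  forall P, List.In P L -> is_prime P /\ exists2 F, F ⊆ Y & P = bigcapR F.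

Lemma prime_intersections_in_cat Y Y1 Y2 L1 L2 : Y1 ⊆ Y -> Y2 ⊆ Y ->
  prime_intersections_in Y1 L1 -> prime_intersections_in Y2 L2 ->
  prime_intersections_in Y (L1 ++ L2).
Proof.
move=> Y1Y Y2Y L1Y1 L2Y2 P /List.in_app_iff [/L1Y1 | /L2Y2] [Pprime [F FY PF]].
- by split=> //; exists F => // q /FY /Y1Y.
- by split=> //; exists F => // q /FY /Y2Y.
Qed.

Lemma prime_intersection_cover (Y : (R -> Prop) -> Prop) : subset_Spec Y ->
  exists2 L, prime_intersections_in Y L & forall p, Y p -> exists2 P, List.In P L & P ⊆ p.
Proof.
pose Cover (I : R -> Prop) := forall Y, subset_Spec Y -> (forall x, I x <-> bigcapR Y x) ->
  exists2 L, prime_intersections_in Y L & forall p, Y p -> exists2 P, List.In P L & P ⊆ p.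
move=> YP; suff: Cover (bigcapR Y) by apply.
apply: noetherian_ind; last exact: bigcapR_ideal.
move=> I _ IH Z ZP IZ.
have [Zprime | Znprime] := classic (is_prime (bigcapR Z)).
  exists [:: bigcapR Z] => [P [<- | []] | p Zp]; first by split=> //; exists Z.
  by exists (bigcapR Z); [left | move=> x; apply].
have [[p0 Zp0] | Zempty] := classic (exists p, Z p); last first.
  by exists [::] => [P [] | p Zp]; case: Zempty; exists p.
have [a [b [Zab [Zna Znb]]]] :
    exists a b, bigcapR Z (a * b) /\ ~ bigcapR Z a /\ ~ bigcapR Z b.
  apply: NNPP => noab; apply: Znprime; split; first exact: bigcapR_ideal.
  split=> [Z1 | a b Zab]; first by have [_ [p0n1 _]] := ZP p0 Zp0; apply: p0n1; apply: Z1.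
  apply: NNPP => /not_or_and [Zna Znb]; apply: noab; by exists a, b.
have cover_with c : ~ bigcapR Z c -> exists2 L,
    prime_intersections_in (fun q => Z q /\ q c) L &
    forall p, Z p -> p c -> exists2 P, List.In P L & P ⊆ p.
  move=> Znc; pose Zc q := Z q /\ q c.
  have ZcP : subset_Spec Zc by move=> q [/ZP].
  have [| |L LZc Lcover] := IH _ (bigcapR_ideal ZcP) _ _ Zc ZcP (fun x => iff_refl _).
  - by move=> x /IZ Zx q [/Zx].
  - by exists c; split=> [q []|/IZ].
  by exists L => // p Zp pc; apply: Lcover.
have [La LaZ Lacover] := cover_with a Zna.
have [Lb LbZ Lbcover] := cover_with b Znb.
exists (La ++ Lb); first by apply: prime_intersections_in_cat LaZ LbZ => q [].
move=> p Zp; have [_ [_ pM]] := ZP p Zp.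
case: (pM a b (Zab p Zp)) => [pa | pb].
- by have [P LP Pp] := Lacover p Zp pa; exists P => //; apply/List.in_app_iff; left.
- by have [P LP Pp] := Lbcover p Zp pb; exists P => //; apply/List.in_app_iff; right.
Qed.

Lemma prime_intersection_cover_pattern (J : nat -> R -> Prop) (k : nat)
    (Y : (R -> Prop) -> Prop) : subset_Spec Y ->
  exists2 L, prime_intersections_in Y L & forall p, Y p -> exists2 P, List.In P L &
    P ⊆ p /\ forall n, (n < k)%N -> (J n ⊆ P <-> J n ⊆ p).
Proof.
elim: k Y => [|k IHk] Y YP.
  have [L LY Lcover] := prime_intersection_cover YP.
  by exists L => // p /Lcover [P LP Pp]; exists P.
have [L1 L1Y L1cover] := IHk (fun q => Y q /\ J k ⊆ q) (fun q Yq => YP q (proj1 Yq)).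
have [L2 L2Y L2cover] := IHk (fun q => Y q /\ ~ J k ⊆ q) (fun q Yq => YP q (proj1 Yq)).
exists (L1 ++ L2); first by apply: prime_intersections_in_cat L1Y L2Y => q [].
move=> p Yp; have [Jp | Jnp] := classic (J k ⊆ p).
- have [P LP [Pp Ppat]] := L1cover p (conj Yp Jp).
  exists P; first by apply/List.in_app_iff; left.
  split=> // n; rewrite ltnS leq_eqVlt => /orP [/eqP -> | /Ppat //].
  have [_ [F FY ->]] := L1Y P LP.
  by split=> // _ x Jx q /FY [_]; apply.
- have [P LP [Pp Ppat]] := L2cover p (conj Yp Jnp).
  exists P; first by apply/List.in_app_iff; right.
  split=> // n; rewrite ltnS leq_eqVlt => /orP [/eqP -> | /Ppat //].
  by split=> // JP; case: Jnp => x /JP /Pp.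
Qed.
End Noetherian.

Section Prime.
Variables (R : comPzRingType) (p : R -> Prop).
Hypothesis pprime : is_prime p.

Lemma prime_notin1 : ~ p 1. Proof. by case: pprime => _ []. Qed.
Lemma prime_in0 : p 0. Proof. by case: pprime => [[]]. Qed.
Lemma prime_inMl a b : p b -> p (a * b). Proof. by case: pprime => [[_ [_ pM]]] _; apply: pM. Qed.

Lemma prime_notinM a b : ~ p a -> ~ p b -> ~ p (a * b).
Proof. by move=> pna pnb; case: pprime => _ [_ pM] /pM []. Qed.

Lemma prime_notin_prod (I : finType) (F : I -> R) : (forall i, ~ p (F i)) -> ~ p (\prod_i F i).
Proof.
move=> pnF; apply: (big_ind (fun x => ~ p x)) => [||i _];
  [exact: prime_notin1 | exact: prime_notinM | exact: pnF].
Qed.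

Lemma prime_common_annihilator (I : finType) (F : I -> R) :
  (forall i, exists u, ~ p u /\ u * F i = 0) -> exists w, ~ p w /\ forall i, w * F i = 0.
Proof.
move=> /choice [u uP]; exists (\prod_i u i); split=> [|i].
  by apply: prime_notin_prod => i; case: (uP i).
by rewrite (bigD1 i) //= mulrAC (proj2 (uP i)) mul0r.
Qed.
End Prime.

Section Localization.
Variables (R : comPzRingType) (M : lmodType R) (p : R -> Prop).
Hypothesis pprime : is_prime p.

Local Notation "x ≈ y" := (locM_eq p x y) (at level 70).
Local Notation valid := (locM_valid p).
Local Notation zero := (@locM_zero R M).
Local Notation add := (@locM_add R M).

Lemma locM_eqP (x y : M * R) :
  x ≈ y <-> exists u, ~ p u /\ (u * y.2) *: x.1 = (u * x.2) *: y.1.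
Proof.
split=> -[u [pnu xy]]; exists u; split=> //.
  by apply/eqP; rewrite -subr_eq0 -!scalerA -scalerBr xy.
by rewrite scalerBr !scalerA xy subrr.
Qed.

Lemma locM_eq_refl (x : M * R) : x ≈ x.
Proof. by exists 1; split; [exact: (prime_notin1 pprime) | rewrite subrr scaler0]. Qed.

Lemma locM_eq_sym (x y : M * R) : x ≈ y -> y ≈ x.
Proof. by move=> [u [pnu xy]]; exists u; rewrite -opprB scalerN xy oppr0. Qed.

Lemma scaler_regroup (a b c : R) (v : M) : c = a * b -> c *: v = a *: (b *: v).
Proof. by move=> ->; rewrite scalerA. Qed.

Lemma locM_eq_trans (y x z : M * R) : valid y -> x ≈ y -> y ≈ z -> x ≈ z.
Proof.
case: x y z => [x1 x2] [y1 y2] [z1 z2] /= pny /locM_eqP [u [pnu xy]] /locM_eqP [v [pnv yz]].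
apply/locM_eqP; exists (u * v * y2); split.
  exact: (prime_notinM pprime) (prime_notinM pprime pnu pnv) pny.
rewrite /= in xy yz *.
rewrite (@scaler_regroup (v * z2) (u * y2)); last by ring.
rewrite xy scalerA (@scaler_regroup (u * x2) (v * z2)); last by ring.
by rewrite yz scalerA; congr (_ *: _); ring.
Qed.

Lemma locM_add_congr (x x' y y' : M * R) :
  x ≈ x' -> y ≈ y' -> add x y ≈ add x' y'.
Proof.
case: x x' y y' => [x1 x2] [a1 a2] [y1 y2] [b1 b2] /locM_eqP [u [pnu xa]] /locM_eqP [v [pnv yb]].
rewrite /= in xa yb; apply/locM_eqP; exists (u * v); split; first exact: (prime_notinM pprime).
rewrite /= !scalerDr !scalerA.
rewrite (@scaler_regroup (v * b2 * y2) (u * a2) _ x1); last by ring.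
rewrite (@scaler_regroup (u * a2 * x2) (v * b2) _ y1); last by ring.
by rewrite xa yb !scalerA; congr (_ *: _ + _ *: _); ring.
Qed.

Lemma locM_addx0 (x : M * R) : add x zero ≈ x.
Proof.
apply/locM_eqP; exists 1; split; first exact: (prime_notin1 pprime).
by rewrite /= scaler0 addr0 scale1r mulr1.
Qed.

Lemma locM_add0x (x : M * R) : add zero x ≈ x.
Proof.
apply/locM_eqP; exists 1; split; first exact: (prime_notin1 pprime).
by rewrite /= scaler0 add0r !mul1r scale1r.
Qed.

Lemma locM_sum_valid n (c : 'I_n -> R * R) (e : 'I_n -> M * R) :
  (forall i, locR_valid p (c i)) -> (forall i, valid (e i)) -> valid (locM_sum c e).
Proof.
move=> cP eP; rewrite /locM_valid /locM_sum.
elim: (enum _) => [|i s IHs] /=; first exact: (prime_notin1 pprime).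
by do 2?apply: (prime_notinM pprime) => //; [exact: cP | exact: eP].
Qed.

Lemma locM_sum_single n (c : 'I_n -> R * R) (e : 'I_n -> M * R) j v :
  (forall i, valid (locM_scale (c i) (e i))) ->
  (forall i, i != j -> locM_scale (c i) (e i) ≈ zero) ->
  locM_scale (c j) (e j) ≈ v -> locM_sum c e ≈ v.
Proof.
pose t i := locM_scale (c i) (e i); move=> tP t0 tj.
suff sum_uniq : forall s, uniq s ->
    foldr add zero [seq t i | i <- s] ≈ if j \in s then t j else zero.
  by have := sum_uniq _ (enum_uniq 'I_n); rewrite mem_enum => /(locM_eq_trans (tP j)); apply.
have validP s : valid (if j \in s then t j else zero).
  by case: ifP => _; [exact: tP | exact: (prime_notin1 pprime)].
elim=> [_|i s IHs /= /andP [/negbTE ins /IHs sumP]]; first exact: locM_eq_refl.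
rewrite in_cons; case: (eqVneq j i) => [ji | nji] /=.
  subst i; rewrite {}ins in sumP; apply: (@locM_eq_trans (add (t j) zero)).
  - by apply: (prime_notinM pprime); [exact: tP | exact: (prime_notin1 pprime)].
  - exact: (locM_add_congr (locM_eq_refl _)).
  - exact: locM_addx0.
apply: (@locM_eq_trans (add zero (if j \in s then t j else zero))).
- by apply: (prime_notinM pprime); [exact: (prime_notin1 pprime) | exact: validP].
- by apply: locM_add_congr => //; apply: t0; rewrite eq_sym.
- exact: locM_add0x.
Qed.
End Localization.

Section LinearForm.
Variables (R : comPzRingType) (M : lmodType R) (h : M -> R).
Hypothesis hlin : linearR h.

Lemma linearR0 : h 0 = 0.
Proof. by have := hlin (-1) 0 0; rewrite scaler0 addr0 mulN1r addNr. Qed.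

Lemma linearRZ a x : h (a *: x) = a * h x.
Proof. by have := hlin a x 0; rewrite !addr0 linearR0 addr0. Qed.

Lemma linearRD x y : h (x + y) = h x + h y.
Proof. by have := hlin 1 x y; rewrite scale1r mul1r. Qed.

Lemma linearRB x y : h (x - y) = h x - h y.
Proof. by rewrite linearRD -scaleN1r linearRZ mulN1r. Qed.

Lemma linearR_sum n (a : 'I_n -> R) (v : 'I_n -> M) :
  h (\sum_(k < n) a k *: v k) = \sum_(k < n) a k * h (v k).
Proof. by rewrite (big_morph h linearRD linearR0); apply: eq_bigr => k _; apply: linearRZ. Qed.

Definition loc_app (x : M * R) : R^o * R := (h x.1, x.2).

Lemma loc_app_eq p x y : locM_eq p x y -> locM_eq p (loc_app x) (loc_app y).
Proof.
move=> [u [pnu xy]]; exists u; split=> //.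
by move: (congr1 h xy); rewrite linearRZ linearRB !linearRZ linearR0.
Qed.

Lemma loc_app_add x y : loc_app (locM_add x y) = locM_add (loc_app x) (loc_app y).
Proof. by rewrite /loc_app /= linearRD !linearRZ. Qed.

Lemma loc_app_sum n (c : 'I_n -> R * R) (e : 'I_n -> M * R) :
  loc_app (locM_sum c e) = locM_sum c (fun k => loc_app (e k)).
Proof.
rewrite /locM_sum; elim: (enum _) => [|i s IHs] /=; first by rewrite /loc_app linearR0.
by rewrite loc_app_add IHs /loc_app /= linearRZ.
Qed.
End LinearForm.

Lemma hom_submod_lincomb (R : comPzRingType) (M : lmodType R) (E : (M -> R) -> Prop) :
  hom_submod E -> forall n (a : 'I_n -> R) (f : 'I_n -> M -> R),
  (forall l, E (f l)) -> E (fun x => \sum_(l < n) a l * f l x).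
Proof.
move=> [_ [E0 [ED EZ]]]; elim=> [|n IHn] a f Ef.
  rewrite (_ : (fun x => _) = fun _ => 0) //.
  by apply: functional_extensionality => x; rewrite big_ord0.
rewrite (_ : (fun x => _) = fun x =>
    a ord0 * f ord0 x + \sum_(l < n) a (lift ord0 l) * f (lift ord0 l) x).
  by apply: ED; [apply: EZ | apply: IHn].
by apply: functional_extensionality => x; rewrite big_ord_recl.
Qed.

Definition minor_dets (R : comPzRingType) (M : lmodType R)
    (E : (M -> R) -> Prop) (N : M -> Prop) n (d : R) : Prop :=
  exists (f : 'I_n -> M -> R) (m : 'I_n -> M),
    [/\ forall i, E (f i), forall j, N (m j) & d = \det (\matrix_(i, j) f i (m j))].

Section FreeSummandMinor.
Variables (R : comPzRingType) (M : lmodType R) (p : R -> Prop).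
Hypothesis pprime : is_prime p.

Lemma det_notin_prime_of_loc_diag n (A : 'M[R]_n) (a b : 'I_n -> R) :
  (forall j, ~ p (a j)) -> (forall j, ~ p (b j)) ->
  (forall i j, exists u, ~ p u /\ u * (a j * A i j - b j * (i == j)%:R) = 0) ->
  ~ p (\det A).
Proof.
move=> pna pnb Adiag.
have [w [pnw wA]] := prime_common_annihilator pprime (fun ij : 'I_n * 'I_n => Adiag ij.1 ij.2).
have AD : A *m diag_mx (\row_j (w * a j)) = diag_mx (\row_j (w * b j)).
  apply/matrixP => i j; rewrite mul_mx_diag !mxE.
  have := wA (i, j); rewrite /=; case: eqP => [<- | _] wAij.
  - by rewrite mulr1n; apply/eqP; rewrite -subr_eq0 -[X in _ == X]wAij mulr1; apply/eqP; ring.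
  - by rewrite mulr0n -wAij mulr0n mulr0 subr0; ring.
move=> pA; move/(congr1 determinant): AD; rewrite det_mulmx !det_diag => AD.
have: p (\prod_j (\row_j (w * b j)) 0 j) by rewrite -AD mulrC; apply: prime_inMl.
by apply: (prime_notin_prod pprime) => j; rewrite mxE; apply: prime_notinM.
Qed.

Lemma free_summand_coord_dual n (e : 'I_n -> M * R) (G : M * R -> Prop)
    (phi : 'I_n -> (M -> R) * R) :
  (forall i, locM_valid p (e i)) -> G (@locM_zero R M) -> (forall i, ~ p (phi i).2) ->
  (forall x, locM_valid p x -> exists g, G g /\
      locM_eq p x (locM_add (locM_sum (fun i => Eapp (phi i) x) e) g)) ->
  (forall (c c' : 'I_n -> R * R) g g',
      (forall i, locR_valid p (c i) /\ locR_valid p (c' i)) -> G g -> G g' ->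
      locM_eq p (locM_add (locM_sum c e) g) (locM_add (locM_sum c' e) g') ->
      forall i, locR_eq p (c i) (c' i)) ->
  forall i j, locR_eq p (Eapp (phi i) (e j)) ((i == j)%:R, 1).
Proof.
move=> eP G0 phiP decomp decomp_uniq i j.
pose delta_j k : R * R := ((k == j)%:R, 1).
have pn1 := prime_notin1 pprime.
have [g [Gg ej_g]] := decomp (e j) (eP j).
have ej_delta : locM_eq p (locM_add (locM_sum delta_j e) (@locM_zero R M)) (e j).
  apply: (locM_eq_trans pprime _ (locM_addx0 pprime _)).
    by apply: (locM_sum_valid pprime) => // k; exact: pn1.
  apply: (locM_sum_single pprime (j := j)) => [k | k /negbTE kj | ].
  - by apply: (prime_notinM pprime) => //; exact: eP.
  - by apply/locM_eqP; exists 1; rewrite /delta_j /= kj scale0r !scaler0.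
  - by apply/locM_eqP; exists 1; rewrite /delta_j /= eqxx scale1r !mul1r.
apply: (decomp_uniq (fun k => Eapp (phi k) (e j)) delta_j g (@locM_zero R M)) => // [k | ].
  by split=> //; apply: (prime_notinM pprime) => //; exact: eP.
exact: locM_eq_trans (eP j) (locM_eq_sym ej_g) (locM_eq_sym ej_delta).
Qed.

Lemma free_E_summand_minor (E : (M -> R) -> Prop) (N : M -> Prop) n :
  hom_submod E -> free_E_summand_in p E N n -> exists2 d, minor_dets E N n d & ~ p d.
Proof.
move=> [Elin _] [e [G [phi [eP [[_ [_ [G0 _]]] [eN [phiP [decomp decomp_uniq]]]]]]]].
have [ms msP] : exists ms : 'I_n -> M * R,
    forall j, N (ms j).1 /\ ~ p (ms j).2 /\ locM_eq p (e j) (ms j).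
  apply: (choice (fun j (ms : M * R) => N ms.1 /\ ~ p ms.2 /\ locM_eq p (e j) ms)) => j.
  by have [m [s msP]] := eN j; exists (m, s).
pose f i := (phi i).1; pose m j := (ms j).1.
exists (\det (\matrix_(i, j) f i (m j))).
  by exists f, m; split=> // [i | j]; [case: (phiP i) | case: (msP j)].
have coord := free_summand_coord_dual eP G0 (fun i => proj2 (phiP i)) decomp decomp_uniq.
apply: (@det_notin_prime_of_loc_diag _ _ (fun j => (e j).2)
  (fun j => (ms j).2 * (phi j).2 * (e j).2)) => [j | j | i j].
- exact: eP.
- have [_ [pns _]] := msP j.
  by do 2?apply: (prime_notinM pprime) => //; [case: (phiP j) | exact: eP].
have [u [pnu uij]] := coord i j.
have [_ [_ /locM_eqP [v [pnv vj]]]] := msP j.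
move/(congr1 (phi i).1): vj; rewrite !(linearRZ (Elin _ (proj1 (phiP i)))) => vj.
exists (u * v); split; first exact: prime_notinM.
rewrite /= in uij; rewrite mxE /f /m.
have -> : (ms j).2 * (phi j).2 * (e j).2 * (i == j)%:R =
    (ms j).2 * (phi i).2 * (e j).2 * (i == j)%:R.
  by case: (eqVneq i j) => [-> | _] //; rewrite !mulr0n !mulr0.
set Fe := (phi i).1 (e j).1 in uij vj *; set Fm := (phi i).1 (ms j).1 in vj *.
have -> : u * v * ((e j).2 * Fm - (ms j).2 * (phi i).2 * (e j).2 * (i == j)%:R) =
    u * (v * (e j).2 * Fm - v * (ms j).2 * Fe) +
    v * (ms j).2 * (u * (1 * Fe - (phi i).2 * (e j).2 * (i == j)%:R)) by ring.
by rewrite -vj subrr mulr0 uij mulr0 addr0.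
Qed.
End FreeSummandMinor.

Section DualFamily.
Variables (R : comPzRingType) (M : lmodType R) (p : R -> Prop).
Hypothesis pprime : is_prime p.
Variables (n : nat) (h : 'I_n -> M -> R) (m : 'I_n -> M) (d : R).
Hypotheses (hlin : forall i, linearR (h i)) (pnd : ~ p d)
  (h_dual : forall i k, h i (m k) = d * (i == k)%:R).

Local Notation valid := (locM_valid p).
Local Notation e := (fun j => (m j, 1 : R)).
Local Notation phi := (fun i => (h i, d)).

Definition loc_kernel (x : M * R) : Prop :=
  ~ p x.2 /\ forall i, exists u, ~ p u /\ u * h i x.1 = 0.

Lemma loc_kernel_submod : loc_submod p loc_kernel.
Proof.
have pnM := prime_notinM pprime.
split; first by move=> x [].
split=> [x y [pnx xker] pny /locM_eqP [v [pnv xy]] | ].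
  split=> // i; have [u [pnu ux]] := xker i.
  move/(congr1 (h i)): xy; rewrite !(linearRZ (hlin i)) => xy.
  exists (u * v * x.2); split; first exact: pnM (pnM _ _ pnu pnv) pnx.
  have -> : u * v * x.2 * h i y.1 = u * (v * x.2 * h i y.1) by ring.
  by rewrite -xy mulrCA -mulrA ux !mulr0.
split.
  split=> [|i]; first exact: prime_notin1.
  by exists 1; rewrite (linearR0 (hlin i)) mulr0; split=> //; exact: prime_notin1.
split=> [x y [pnx xker] [pny yker] | c x pnc [pnx xker]].
  split=> [|i]; first exact: pnM.
  have [[u [pnu ux]] [v [pnv vy]]] := (xker i, yker i).
  exists (u * v); split; first exact: pnM.
  rewrite /= (linearRD (hlin i)) !(linearRZ (hlin i)).
  have -> : u * v * (y.2 * h i x.1 + x.2 * h i y.1) =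
    v * y.2 * (u * h i x.1) + u * x.2 * (v * h i y.1) by ring.
  by rewrite ux vy !mulr0 addr0.
split=> [|i]; first exact: pnM.
have [u [pnu ux]] := xker i; exists u; split=> //.
by rewrite /= (linearRZ (hlin i)) mulrCA ux mulr0.
Qed.

Lemma loc_app_dual_sum i (c : 'I_n -> R * R) : (forall k, locR_valid p (c k)) ->
  locM_eq p (locM_sum c (fun k => loc_app (h i) (e k))) ((c i).1 * d, (c i).2).
Proof.
move=> cP; apply: (locM_sum_single pprime (j := i)) => [k | k ki | ].
- by apply: (prime_notinM pprime); [exact: cP | exact: prime_notin1].
- apply/locM_eqP; exists 1; split; first exact: prime_notin1.
  by rewrite /= h_dual eq_sym (negbTE ki) mulr0n mulr0 !scaler0.
- apply/locM_eqP; exists 1; split; first exact: prime_notin1.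
  by rewrite /= h_dual eqxx /= !mulr1 !mul1r.
Qed.

Lemma loc_app_dual_summand i (c : 'I_n -> R * R) g :
  (forall k, locR_valid p (c k)) -> loc_kernel g ->
  locM_eq p (loc_app (h i) (locM_add (locM_sum c e) g)) ((c i).1 * d, (c i).2).
Proof.
move=> cP [png gker]; rewrite loc_app_add ?loc_app_sum //.
apply: (locM_eq_trans pprime (y := @locM_add R R^o ((c i).1 * d, (c i).2) (@locM_zero R R^o))).
- by apply: (prime_notinM pprime); [exact: cP | exact: prime_notin1].
- apply: (locM_add_congr pprime); first exact: loc_app_dual_sum.
  have [u [pnu ug]] := gker i; apply/locM_eqP; exists u; split=> //.
  by rewrite /= scaler0 mulr1.
- exact: locM_addx0.
Qed.

Lemma dual_decomposition x : valid x -> exists g, loc_kernel g /\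
  locM_eq p x (locM_add (locM_sum (fun i => Eapp (phi i) x) e) g).
Proof.
move=> pnx; set s := locM_sum _ e.
have pns : ~ p s.2.
  by apply: (locM_sum_valid pprime) => k; [apply: (prime_notinM pprime) | exact: prime_notin1].
exists (s.2 *: x.1 - x.2 *: s.1, x.2 * s.2); split.
  split=> [|i]; first exact: (prime_notinM pprime).
  have := @loc_app_dual_sum i (fun k => Eapp (phi k) x) (fun k => prime_notinM pprime pnd pnx).
  rewrite -loc_app_sum // => /locM_eqP [u [pnu us]].
  have {}us : u * (d * x.2) * h i s.1 = u * s.2 * (h i x.1 * d) := us.
  exists (u * d); split; first exact: (prime_notinM pprime).
  rewrite /= (linearRB (hlin i)) !(linearRZ (hlin i)).
  have -> : u * d * (s.2 * h i x.1 - x.2 * h i s.1) =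
    u * s.2 * (h i x.1 * d) - u * (d * x.2) * h i s.1 by ring.
  by rewrite -us subrr.
apply/locM_eqP; exists 1; split; first exact: prime_notin1.
rewrite /= scalerBr !scalerA [s.2 * x.2]mulrC addrCA subrr addr0 scalerA.
by congr (_ *: _); ring.
Qed.

Lemma dual_decomposition_uniq (c c' : 'I_n -> R * R) g g' :
  (forall i, locR_valid p (c i) /\ locR_valid p (c' i)) -> loc_kernel g -> loc_kernel g' ->
  locM_eq p (locM_add (locM_sum c e) g) (locM_add (locM_sum c' e) g') ->
  forall i, locR_eq p (c i) (c' i).
Proof.
move=> cP gker g'ker cg_c'g' i.
have [pnc pnc'] := (fun k => proj1 (cP k), fun k => proj2 (cP k)).
have valid_sum (b : 'I_n -> R * R) f : (forall k, ~ p (b k).2) -> loc_kernel f ->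
    ~ p (loc_app (h i) (locM_add (locM_sum b e) f)).2.
  move=> pnb [pnf _]; apply: (prime_notinM pprime) pnf.
  by apply: (locM_sum_valid pprime) => // k; exact: prime_notin1.
have /locM_eqP [u [pnu cc']] :
    @locM_eq R R^o p ((c i).1 * d, (c i).2) ((c' i).1 * d, (c' i).2).
  apply: (locM_eq_trans pprime (valid_sum c g pnc gker)).
    exact/locM_eq_sym/loc_app_dual_summand.
  apply: (locM_eq_trans pprime (valid_sum c' g' pnc' g'ker)); first exact: loc_app_eq.
  exact: loc_app_dual_summand.
have {}cc' : u * (c' i).2 * ((c i).1 * d) = u * (c i).2 * ((c' i).1 * d) := cc'.
exists (u * d); split; first exact: (prime_notinM pprime).
have -> : u * d * ((c' i).2 * (c i).1 - (c i).2 * (c' i).1) =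
  u * (c' i).2 * ((c i).1 * d) - u * (c i).2 * ((c' i).1 * d) by ring.
by rewrite cc' subrr.
Qed.

Lemma dual_free_E_summand (E : (M -> R) -> Prop) (N : M -> Prop) :
  (forall i, E (h i)) -> (forall j, N (m j)) -> free_E_summand_in p E N n.
Proof.
move=> hE mN; exists e, loc_kernel, phi; split; first by move=> i; exact: prime_notin1.
split; first exact: loc_kernel_submod.
split.
  by move=> j; exists (m j), 1; do !split=> //; [exact: prime_notin1 | exact: locM_eq_refl].
split; first by move=> i; split; [exact: hE | exact: pnd].
by split; [exact: dual_decomposition | exact: dual_decomposition_uniq].
Qed.
End DualFamily.

Section MinorCharacterization.
Variables (R : comPzRingType) (M : lmodType R).

Lemma minor_free_E_summand p (E : (M -> R) -> Prop) (N : M -> Prop) n d :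
  is_prime p -> hom_submod E -> minor_dets E N n d -> ~ p d -> free_E_summand_in p E N n.
Proof.
move=> pprime HE [f [m [fE mN ->]]] pnd.
set A := \matrix_(i, j) f i (m j).
pose h i x := \sum_(l < n) \adj A i l * f l x.
have hE i : E (h i) by apply: hom_submod_lincomb.
apply: (@dual_free_E_summand _ _ _ pprime _ h m (\det A)) => // [i | i k].
- exact: (proj1 HE) (hE i).
- have := congr1 (fun B : 'M[R]_n => B i k) (mul_adj_mx A).
  by rewrite !mxE mulr_natr /h => <-; apply: eq_bigr => l _; rewrite [A l k]mxE.
Qed.

Lemma free_E_summand_iff_minor p (E : (M -> R) -> Prop) (N : M -> Prop) n :
  is_prime p -> hom_submod E -> free_E_summand_in p E N n <-> ~ minor_dets E N n ⊆ p.
Proof.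
move=> pprime HE; split=> [/(free_E_summand_minor pprime HE) [d Dd pnd] | Dnsub].
  by move/(_ d Dd).
apply: NNPP => nfree; apply: Dnsub => d Dd; apply: NNPP => pnd.
exact/nfree/(minor_free_E_summand pprime HE Dd pnd).
Qed.

Lemma det_eval_eq0 k (g : 'I_k -> M) n (f : 'I_n -> M -> R) (m : 'I_n -> M) :
  (forall x, exists c : 'I_k -> R, x = \sum_(l < k) c l *: g l) ->
  (forall i, linearR (f i)) -> (k < n)%N -> \det (\matrix_(i, j) f i (m j)) = 0.
Proof.
move=> gen flin kn.
have [c mc] := choice (fun j (c : 'I_k -> R) => m j = \sum_(l < k) c l *: g l)
  (fun j => gen (m j)).
(* Padding g with zeros makes the matrix factor through one with a zero column. *)
pose pad T (x0 : T) (t : 'I_k -> T) (l : nat) := if insub l is Some l' then t l' else x0.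
have pad_in T x0 t (l : 'I_k) : pad T x0 t l = t l by rewrite /pad valK.
have pad_out T x0 t l : (k <= l)%N -> pad T x0 t l = x0.
  by move=> kl; rewrite /pad insubF // ltnNge kl.
have m_pad j : m j = \sum_(l < n) pad _ 0 (c j) l *: pad _ 0 g l.
  rewrite mc (eq_bigr (fun l : 'I_k => pad _ 0 (c j) l *: pad _ 0 g l)) => [|l _];
    last by rewrite !pad_in.
  rewrite (big_ord_widen n (fun l => pad _ 0 (c j) l *: pad _ 0 g l) (ltnW kn)) big_mkcond.
  by apply: eq_bigr => l _; case: ltnP => // /(pad_out _ 0 g) ->; rewrite scaler0.
have -> : \matrix_(i, j) f i (m j) =
    \matrix_(i < n, l < n) f i (pad _ 0 g l) *m \matrix_(l < n, j < n) pad _ 0 (c j) l.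
  apply/matrixP => i j; rewrite !mxE m_pad (linearR_sum (flin i)).
  by apply: eq_bigr => l _; rewrite !mxE mulrC.
rewrite det_mulmx (expand_det_col _ (Ordinal kn)) big1 ?mul0r // => i _.
by rewrite mxE pad_out // (linearR0 (flin i)) mul0r.
Qed.

Lemma minor_dets_sub_prime p (E : (M -> R) -> Prop) (N : M -> Prop) k (g : 'I_k -> M) n :
  is_prime p -> hom_submod E -> (forall x, exists c : 'I_k -> R, x = \sum_(l < k) c l *: g l) ->
  (k < n)%N -> minor_dets E N n ⊆ p.
Proof.
move=> pprime [Elin _] gen kn d [f [m [fE _ ->]]].
by rewrite (det_eval_eq0 m gen) // => [|i]; [exact: prime_in0 | apply: Elin].
Qed.
End MinorCharacterization.

Lemma eq_delta (R : comPzRingType) (M : lmodType R) (p q : R -> Prop)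
    (E : (M -> R) -> Prop) (S : M -> Prop) :
  (forall n, free_E_summand_in p E (Defs.span S) n <->
             free_E_summand_in q E (Defs.span S) n) ->
  delta p E S = delta q E S.
Proof.
move=> pq; rewrite /delta; congr (epsilon _ _).
apply: functional_extensionality => n; apply: propositional_extensionality.
by split=> -[free_n max_n]; split=> [|k /pq];
  [apply/pq | apply: max_n | apply/pq | apply: max_n].
Qed.

Theorem lemma4p2 (R : comPzRingType) (M : lmodType R)
    (X : (R -> Prop) -> Prop) (E : (M -> R) -> Prop) (S : M -> Prop) :
  noetherian R -> fin_gen M -> subset_Spec X -> basic X -> hom_submod E ->
  exists Lambda : seq (R -> Prop),
    (forall q, List.In q Lambda -> X q) /\
    forall p, X p -> ~ List.In p Lambda ->
      exists q, List.In q Lambda /\ (forall x, q x -> p x) /\ q <> p /\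
        delta p E S = delta q E S.
Proof.
move=> noethR [k [g gen]] XP Xbasic HE.
have [L LX Lcover] :=
  prime_intersection_cover_pattern noethR (minor_dets E (Defs.span S)) k.+1 XP.
exists L; split=> [q /LX [qprime [F FX qF]] | p Xp pnL]; first by subst q; exact: Xbasic.
have [q Lq [qp qpat]] := Lcover p Xp; have [qprime _] := LX q Lq.
exists q; split=> //; split=> //; split=> [qp_eq | ]; first by apply: pnL; rewrite -qp_eq.
apply: eq_delta => n; rewrite !free_E_summand_iff_minor //; last exact: XP.
have [nk | kn] := leqP n k; first by have := qpat n nk; tauto.
by split=> Dnsub; case: Dnsub; apply: (minor_dets_sub_prime _ HE gen) => //; exact: XP.
Qed.
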